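(* Let $n\ge2$ and let $f$ be a function from the set of Schubert problems for $GL_n$ (triples $(u,v,w)\in S_n^3$ with $l(u)+l(v)+l(w)=\binom n2$) to $\mathbb Z$ satisfying: (1) (descent-cycling invariance) for every triple $(u,v,w)\in S_n^3$ with $l(u)+l(v)+l(w)=\binom n2-1$ and every $i\in\{1,\dots,n-1\}$ with $u(i)<u(i+1)$, $v(i)<v(i+1)$, $w(i)<w(i+1)$, one has $f(us_i,v,w)=f(u,vs_i,w)=f(u,v,ws_i)$; (2) $f(u,v,w)=0$ whenever there is $i$ with $u(i)<u(i+1)$, $v(i)<v(i+1)$ and $w(i)<w(i+1)$; (3) $f(\mathrm{id},\mathrm{id},w_0)=1$. Then $f$ obeys Monk's rule: let $\pi\in S_n$, $i\in\{1,\dots,n-1\}$, and let $\tau\in S_n$ be defined by $\tau(m)=n+1-\pi(m)$. Let $\sigma$ be obtained from $\tau$ by swapping the entries in positions $j<k$, where $\tau(j)>\tau(k)$ and $l(\sigma)=l(\tau)-1$. Then $f(\pi,s_i,\sigma)=1$ if $j\le i<k$, and $f(\pi,s_i,\sigma)=0$ if $j,k\le i$ or $j,k\ge i+1$.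
   Context: Permutations are in one-line notation; $l$ is the number of inversions; $w_0=n\,n{-}1\cdots1$; $\mathrm{id}$ is the identity; $s_i$ is the transposition $i\leftrightarrow i+1$, and $us_i$ denotes $u$ with the entries in positions $i,i+1$ swapped. Note $(\pi,s_i,\sigma)$ is automatically a Schubert problem. *)

(* Permutations of {1..n} are modelled as 'S_n (0-indexed). *)
From mathcomp Require Import all_boot all_order all_fingroup all_algebra.
Set Implicit Arguments. Unset Strict Implicit. Unset Printing Implicit Defensive.

Definition len n (u : 'S_n) : nat :=
  #|[set p : 'I_n * 'I_n | (p.1 < p.2) && (u p.2 < u p.1)]|.

(* u s_(i,j): u with the entries in positions i and j swapped;
   (tperm i j * u) x = u (tperm i j x) *)
Definition swap_pos n (u : 'S_n) (i j : 'I_n) : 'S_n := (tperm i j * u)%g.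

Definition w0 n : 'S_n := perm (@rev_ord_inj n).

Definition schubert n (u v w : 'S_n) : Prop := len u + len v + len w = 'C(n, 2).

(* position i is an ascent of u (i' is the position i+1) *)
Definition ascent n (u : 'S_n) (i i' : 'I_n) : bool := u i < u i'.

(* Write tau for m |-> n+1-pi(m), so that l(sigma) = l(tau) - 1 says that no value between
   tau(k) and tau(j) occurs at a position strictly between j and k. Descent cycling at an
   adjacent position p <> i, applied to the outer factors, gives
   f(pi, s_i, sigma) = f(pi s_p, s_i, sigma s_p); when p and p+1 lie in [j, k] this is a problem
   of the same shape for the image of (j, k) under s_p. Sliding the right end of (j, k) to the
   left, or the left end to the right when the right end is i+1, keeps the truth value of
   j <= i < k and reduces to k = j+1. There f vanishes by (2) unless j = i, and for j = i one
   more descent cycling leads to f(pi, id, tau) = 1, since by (1)-(3) and induction on l(u),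
   f(u, id, w) is 1 if w(m) = n+1-u(m) for all m and 0 otherwise. *)

From mathcomp Require Import all_boot all_order all_fingroup all_algebra.
From mathcomp Require Import zify.
Set Implicit Arguments. Unset Strict Implicit. Unset Printing Implicit Defensive.

Section SwapPos.
Variable n : nat.
Implicit Types (u v U : 'S_n) (a b i j p q x : 'I_n).

Lemma swap_posE U i j x : swap_pos U i j x = U (tperm i j x).
Proof. by rewrite permM. Qed.

Lemma swap_posL U i j : swap_pos U i j i = U j.
Proof. by rewrite swap_posE tpermL. Qed.

Lemma swap_posR U i j : swap_pos U i j j = U i.
Proof. by rewrite swap_posE tpermR. Qed.

Lemma swap_posD U i j x : i != x -> j != x -> swap_pos U i j x = U x.
Proof. by move=> ix jx; rewrite swap_posE tpermD. Qed.

Lemma swap_posK U i j : swap_pos (swap_pos U i j) i j = U.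
Proof. exact: tpermKg. Qed.

Lemma swap_posM u v i j : swap_pos (u * v) i j = (swap_pos u i j * v)%g.
Proof. exact: mulgA. Qed.

Lemma swap_pos_conj U a b p q :
  swap_pos (swap_pos U a b) p q = swap_pos (swap_pos U p q) (tperm p q a) (tperm p q b).
Proof.
rewrite /swap_pos -tpermJ conjgE tpermV !mulgA; congr (_ * U)%g.
by rewrite -!mulgA tperm2 mulg1.
Qed.

Lemma perm_ltnNgt U a b : a != b -> (U a < U b) = ~~ (U b < U a).
Proof.
move=> ab; rewrite -leqNgt [in RHS]leq_eqVlt -[_ == _]/(U a == U b).
by rewrite (inj_eq perm_inj) (negbTE ab).
Qed.

Lemma val_tperm a b x :
  val (tperm a b x) = if x == a then val b else if x == b then val a else val x.
Proof.
case: tpermP => [->|->|/eqP/negbTE-> /eqP/negbTE->] //; rewrite eqxx //.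
by case: eqP => [->|].
Qed.

Lemma ltn_tperm_adj p q a b : q = p.+1 :> nat ->
  (a, b) != (p, q) -> (a, b) != (q, p) ->
  (tperm p q a < tperm p q b) = (a < b).
Proof.
rewrite !val_tperm !xpair_eqE -!val_eqE /= => hq.
by do 4 case: eqP; move=> *; apply/idP/idP; lia.
Qed.

End SwapPos.

Section Length.
Variable n : nat.
Implicit Types (u w U W : 'S_n) (a b i j k m p q x : 'I_n).

Lemma neq_adj p q : q = p.+1 :> nat -> p != q.
Proof. by move=> hq; rewrite -val_eqE /= hq neq_ltn ltnSn. Qed.

Lemma ascent_swap_pos U p q : q = p.+1 :> nat -> ascent (swap_pos U p q) p q = ~~ ascent U p q.
Proof. by move=> /neq_adj pq; rewrite /ascent swap_posL swap_posR perm_ltnNgt // eq_sym. Qed.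

Lemma len_swap_pos U a b :
  len (swap_pos U a b) =
  #|[set e : 'I_n * 'I_n | (tperm a b e.1 < tperm a b e.2) && (U e.2 < U e.1)]|.
Proof.
pose t2 (e : 'I_n * 'I_n) := (tperm a b e.1, tperm a b e.2).
have t2_inj : injective t2 by move=> [? ?] [? ?] [/perm_inj-> /perm_inj->].
rewrite /len -(card_preimset _ t2_inj); congr #|pred_of_set _|.
by apply/setP => e; rewrite !inE /= !swap_posE !tpermK.
Qed.

Lemma len_swap_pos_ascent U p q : q = p.+1 :> nat -> ascent U p q ->
  len (swap_pos U p q) = (len U).+1.
Proof.
move=> hq asc; rewrite len_swap_pos /len.
have -> : [set e : 'I_n * 'I_n | (tperm p q e.1 < tperm p q e.2) && (U e.2 < U e.1)] =
          (q, p) |: [set e : 'I_n * 'I_n | (e.1 < e.2) && (U e.2 < U e.1)].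
  apply/setP => -[a b]; rewrite !inE /=.
  have [[-> ->]|ne_qp] := eqVneq (a, b) (q, p); first by rewrite tpermL tpermR hq ltnSn.
  have [[-> ->]|ne_pq] := eqVneq (a, b) (p, q).
    by rewrite tpermL tpermR hq ltnNge leqnSn /= andbC ltnNge ltnW.
  by rewrite ltn_tperm_adj.
by rewrite cardsU1 inE /= hq ltnNge leqnSn.
Qed.

Lemma len_swap_pos_descent U p q : q = p.+1 :> nat -> ~~ ascent U p q ->
  (len (swap_pos U p q)).+1 = len U.
Proof.
move=> hq desc; rewrite -{2}(swap_posK U p q) (len_swap_pos_ascent (U := swap_pos U p q)) //.
by rewrite ascent_swap_pos.
Qed.

Lemma len1 : len (1 : 'S_n) = 0.
Proof.
apply/eqP; rewrite cards_eq0; apply/eqP/setP => e; rewrite !inE !perm1.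
by apply/negbTE/andP => -[/ltn_trans lt /lt]; rewrite ltnn.
Qed.

Lemma ascent1 p q : q = p.+1 :> nat -> ascent 1 p q.
Proof. by move=> hq; rewrite /ascent !perm1 hq. Qed.

Lemma swap_pos1 i j : swap_pos 1 i j = tperm i j.
Proof. exact: mulg1. Qed.

Lemma len_tperm_adj i j : j = i.+1 :> nat -> len (tperm i j) = 1.
Proof. by move=> hj; rewrite -swap_pos1 len_swap_pos_ascent ?len1 ?ascent1. Qed.

Lemma ascent_tperm_adj i j p q : j = i.+1 :> nat -> q = p.+1 :> nat -> p != i ->
  ascent (tperm i j) p q.
Proof.
move=> hj hq pi; rewrite /ascent ltn_tperm_adj // ?hq // xpair_eqE ?(negbTE pi) //.
by rewrite -!val_eqE /= hj hq; apply/negP => /andP[/eqP-> /eqP]; lia.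
Qed.

Lemma card_ltn_pairs : #|[set e : 'I_n * 'I_n | e.1 < e.2]| = 'C(n, 2).
Proof.
rewrite -bin2_sum big_mkord -(sum1dep_card (fun e : 'I_n * 'I_n => e.1 < e.2)).
rewrite -(pair_big_dep xpredT (fun a b : 'I_n => a < b) (fun _ _ => 1)) /=.
rewrite (exchange_big_dep xpredT) //=; apply: eq_bigr => b _.
rewrite -(big_ord_widen_cond _ (fun _ => true) (fun _ => 1) (ltnW (ltn_ord b))).
by rewrite sum1_card card_ord.
Qed.

Lemma ltn_rev_ord a b : (rev_ord a < rev_ord b) = (b < a).
Proof. by rewrite /= ltn_sub2lE ?ltnS. Qed.

Lemma mul_w0E u x : (u * w0 n)%g x = rev_ord (u x).
Proof. by rewrite permM /w0 permE. Qed.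

Lemma ascent_mul_w0 u p q : p != q -> ascent (u * w0 n) p q = ~~ ascent u p q.
Proof. by move=> pq; rewrite /ascent !mul_w0E ltn_rev_ord perm_ltnNgt // eq_sym. Qed.

Lemma len_mul_w0 u : len (u * w0 n) + len u = 'C(n, 2).
Proof.
rewrite -card_ltn_pairs -(cardsID [set e : 'I_n * 'I_n | u e.2 < u e.1]) addnC.
congr (_ + _); apply: eq_card => e; rewrite !inE ?mul_w0E ?ltn_rev_ord andbC //.
case lt12: (e.1 < e.2); rewrite ?andbF //= perm_ltnNgt //.
exact: negbT (ltn_eqF lt12).
Qed.

Lemma leq_adj_increasing (g : 'I_n -> 'I_n) :
  (forall p q, q = p.+1 :> nat -> g p < g q) -> forall x, x <= g x.
Proof.
move=> g_incr [m lt_mn]; elim: m lt_mn => [//|m IHm] lt_mn.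
exact: leq_ltn_trans (IHm (ltnW lt_mn)) (g_incr (Ordinal (ltnW lt_mn)) (Ordinal lt_mn) erefl).
Qed.

Lemma adj_increasing_id (g : 'I_n -> 'I_n) :
  (forall p q, q = p.+1 :> nat -> g p < g q) -> forall x, g x = x.
Proof.
move=> g_incr x; apply/val_inj/eqP => /=; rewrite eqn_leq leq_adj_increasing // andbT.
pose h y := rev_ord (g (rev_ord y)).
have h_incr p q : q = p.+1 :> nat -> h p < h q.
  move=> hq; rewrite ltn_rev_ord; apply: g_incr => /=.
  by move: hq => /=; have := ltn_ord q; lia.
by have := leq_adj_increasing h_incr (rev_ord x); rewrite /h rev_ordK leqNgt ltn_rev_ord -leqNgt.
Qed.

Lemma eq1_ascents u : (forall p q, q = p.+1 :> nat -> ascent u p q) -> u = 1%g.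
Proof. by move=> asc; apply/permP => x; rewrite perm1; apply: adj_increasing_id. Qed.

Lemma eq_w0_descents w : (forall p q, q = p.+1 :> nat -> ~~ ascent w p q) -> w = w0 n.
Proof.
move=> desc; apply/permP => x; rewrite /w0 permE -[w x]rev_ordK; congr rev_ord.
apply: (adj_increasing_id (g := fun y => rev_ord (w y))) => p q hq.
by rewrite ltn_rev_ord perm_ltnNgt ?desc // eq_sym neq_adj.
Qed.

Lemma len_eq0 u : len u = 0 -> u = 1%g.
Proof.
move=> u0; apply: eq1_ascents => p q hq; apply/negPn/negP => desc.
by have := len_swap_pos_descent hq desc; rewrite u0.
Qed.

Lemma len_swap_pos_inversion U j k : j < k -> U k < U j ->
  len (swap_pos U j k) < len U /\
  ((len (swap_pos U j k)).+1 = len U ->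
   forall m, j < m < k -> (U m < U k) = (U m < U j)).
Proof.
move=> jk; have [d] : exists d, k = j + d.+1 :> nat by exists (k - j.+1); lia.
elim: d U j k {jk} => [|d IHd] U j k hk kj.
  have hk1 : k = j.+1 :> nat by rewrite hk addn1.
  have lenU : (len (swap_pos U j k)).+1 = len U.
    by apply: len_swap_pos_descent; rewrite // /ascent -leqNgt ltnW.
  by split=> [|_ m /andP[jm]]; [rewrite -lenU | rewrite hk1 ltnS leqNgt jm].
(* With p = k - 1, t_jk = s_p t_jp s_p: induct through V = U s_p and W = V t_jp. *)
have p_lt_n : j + d.+1 < n by have := ltn_ord k; lia.
pose p := Ordinal p_lt_n.
have hk1 : k = p.+1 :> nat by rewrite hk addnS.
have [pj kj' jk pk] : [/\ p != j, k != j, j != k & p != k].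
  by rewrite -!val_eqE /=; split; lia.
set V := swap_pos U p k; set W := swap_pos V j p.
have -> : swap_pos U j k = swap_pos W p k.
  by rewrite /W swap_pos_conj swap_posK tpermL tpermD.
have [Vj Vp Wp Wk] : [/\ V j = U j, V p = U k, W p = U j & W k = U p].
  by rewrite /W /V swap_posR swap_posL (swap_posD _ jk pk) swap_posR swap_posD.
have VpVj : V p < V j by rewrite Vp Vj.
have [lenW between_V] := IHd V j p erefl VpVj; rewrite -/W in lenW between_V.
have [lenWs_lt cover_cases] : len (swap_pos W p k) < len U /\
    ((len (swap_pos W p k)).+1 = len U -> (len W).+1 = len V /\ (U p < U k) = (U p < U j)).
  have [pk_asc|pk_desc] := boolP (U p < U k).
    have lenV : len V = (len U).+1 := len_swap_pos_ascent hk1 pk_asc.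
    have lenWs : (len (swap_pos W p k)).+1 = len W.
      apply: (len_swap_pos_descent hk1).
      by rewrite /ascent Wp Wk -leqNgt ltnW // (ltn_trans pk_asc).
    by split=> [|cover]; [lia | rewrite (ltn_trans pk_asc kj); split=> //; lia].
  have kp : U k < U p by rewrite perm_ltnNgt // eq_sym.
  have lenV : (len V).+1 = len U := len_swap_pos_descent hk1 pk_desc.
  have [jp_asc|jp_desc] := boolP (U j < U p).
    have lenWs : len (swap_pos W p k) = (len W).+1.
      by apply: (len_swap_pos_ascent hk1); rewrite /ascent Wp Wk.
    by split=> [|cover]; [lia | rewrite (ltnNge (U p)) ltnW //; split=> //; lia].
  have lenWs : (len (swap_pos W p k)).+1 = len W.
    by apply: (len_swap_pos_descent hk1); rewrite /ascent Wp Wk.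
  by split=> [|cover]; lia.
split=> // cover m /andP[jm mk]; have [coverW p_between] := cover_cases cover.
have [mp|pm] := ltnP m p; last first.
  by have -> : m = p by apply/val_inj/eqP; rewrite eqn_leq pm -ltnS -hk1 mk.
have [pm km] : p != m /\ k != m by rewrite -!val_eqE /=; split; lia.
by have := between_V coverW m; rewrite jm mp Vp Vj /V swap_posD //; apply.
Qed.

Lemma cover_descent U j k : j < k -> (len (swap_pos U j k)).+1 = len U -> U k < U j.
Proof.
move=> jk cover; have kj : k != j by rewrite -val_eqE /= gtn_eqF.
rewrite (perm_ltnNgt U kj); apply/negP => jk_asc.
have W_desc : swap_pos U j k k < swap_pos U j k j by rewrite swap_posL swap_posR.
have [] := len_swap_pos_inversion jk W_desc; rewrite swap_posK; lia.
Qed.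

Lemma cover_between U j k m : (len (swap_pos U j k)).+1 = len U -> j < m < k ->
  (U m < U k) = (U m < U j).
Proof.
move=> cover jmk; have jk : j < k by case/andP: jmk; apply: ltn_trans.
by have [_] := len_swap_pos_inversion jk (cover_descent jk cover); apply.
Qed.

Lemma ascent_cover_last U j p k : j < p -> k = p.+1 :> nat ->
  (len (swap_pos U j k)).+1 = len U -> ascent (swap_pos U j k) p k = ascent U p k.
Proof.
move=> jp hk cover; have [jp' kp] : j != p /\ k != p by rewrite -!val_eqE /=; split; lia.
rewrite /ascent swap_posR swap_posD //; apply/esym/(cover_between cover).
by rewrite jp hk ltnSn.
Qed.

Lemma ascent_cover_first U j q k : q = j.+1 :> nat -> q < k ->
  (len (swap_pos U j k)).+1 = len U -> ascent (swap_pos U j k) j q = ascent U j q.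
Proof.
move=> hq qk cover; have [jq kq] : j != q /\ k != q by rewrite -!val_eqE /=; split; lia.
rewrite /ascent swap_posL swap_posD // (perm_ltnNgt U kq) (perm_ltnNgt U jq).
by congr negb; apply: (cover_between cover); rewrite qk hq ltnSn.
Qed.

Lemma len_swap_pos_cover U W p q : q = p.+1 :> nat -> (len W).+1 = len U ->
  ascent W p q = ascent U p q -> (len (swap_pos W p q)).+1 = len (swap_pos U p q).
Proof.
move=> hq cover; have [asc|desc] := boolP (ascent U p q) => agree.
  by rewrite !len_swap_pos_ascent ?agree ?cover.
have := len_swap_pos_descent hq desc; have := len_swap_pos_descent hq (negbT agree).
lia.
Qed.

Lemma schubert_cover u i j k l : j = i.+1 :> nat ->
  (len (swap_pos (u * w0 n) k l)).+1 = len (u * w0 n) ->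
  schubert u (tperm i j) (swap_pos (u * w0 n) k l).
Proof. by move=> hj cover; have := len_mul_w0 u; rewrite /schubert len_tperm_adj //; lia. Qed.

End Length.

Section MonkRule.
Variables (n : nat) (f : 'S_n -> 'S_n -> 'S_n -> int).
Hypothesis descent_cycling :
  forall (u v w : 'S_n), len u + len v + len w = 'C(n, 2) - 1 ->
  forall i i' : 'I_n, val i' = (val i).+1 ->
  ascent u i i' -> ascent v i i' -> ascent w i i' ->
  f (swap_pos u i i') v w = f u (swap_pos v i i') w /\
  f u (swap_pos v i i') w = f u v (swap_pos w i i').
Hypothesis vanishing :
  forall (u v w : 'S_n), schubert u v w ->
  (exists i i' : 'I_n, val i' = (val i).+1 /\
     [/\ ascent u i i', ascent v i i' & ascent w i i']) ->
  f u v w = 0%R.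
Hypothesis normalization : f 1%g 1%g (w0 n) = 1%R.
Implicit Types (u v w : 'S_n) (i j k p q : 'I_n).

Lemma f_swap_pos_outer u v w p q : q = p.+1 :> nat -> schubert u v w ->
  ascent v p q -> ascent u p q != ascent w p q ->
  f u v w = f (swap_pos u p q) v (swap_pos w p q).
Proof.
move=> hq sch av; wlog au : u w sch / ascent u p q.
  move=> wlog_asc neq.
  have [au|du] := boolP (ascent u p q); first exact: wlog_asc.
  have aw : ascent w p q by move: neq; rewrite (negbTE du); case: ascent.
  have sch' : schubert (swap_pos u p q) v (swap_pos w p q).
    have := len_swap_pos_descent hq du; move: sch; rewrite /schubert (len_swap_pos_ascent hq aw).
    lia.
  have au' : ascent (swap_pos u p q) p q by rewrite ascent_swap_pos.
  have neq' : ascent (swap_pos u p q) p q != ascent (swap_pos w p q) p q.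
    by rewrite !ascent_swap_pos // aw du.
  by rewrite (wlog_asc _ _ sch' au' neq') !swap_posK.
move=> neq; have dw : ~~ ascent w p q by move: neq; rewrite au; case: ascent.
have sum : len u + len v + len (swap_pos w p q) = 'C(n, 2) - 1.
  by have := len_swap_pos_descent hq dw; move: sch; rewrite /schubert; lia.
have aw' : ascent (swap_pos w p q) p q by rewrite ascent_swap_pos.
by have [-> ->] := descent_cycling sum hq au av aw'; rewrite swap_posK.
Qed.

Lemma f_id_middle u w : schubert u 1 w ->
  f u 1 w = if w == (u * w0 n)%g then 1%R else 0%R.
Proof.
have [l] := ubnP (len u); elim: l => // l IHl in u w *; rewrite ltnS => ul sch.
have [/existsP[p /existsP[q /andP[/eqP hq aw]]]|no_asc] :=
  boolP [exists p : 'I_n, exists q : 'I_n, (q == p.+1 :> nat) && ascent w p q].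
  have pq := neq_adj hq.
  have [au|du] := boolP (ascent u p q).
    have w_neq : w != (u * w0 n)%g.
      by apply: contraTneq aw => ->; rewrite ascent_mul_w0 // au.
    rewrite (negbTE w_neq) vanishing //.
    by exists p, q; split=> //; split; rewrite // ascent1.
  have lenu := len_swap_pos_descent hq du.
  have neq : ascent u p q != ascent w p q by rewrite aw (negbTE du).
  rewrite (f_swap_pos_outer hq sch (ascent1 hq) neq) IHl; last 2 first.
  - by rewrite -ltnS lenu.
  - by move: sch; rewrite /schubert (len_swap_pos_ascent hq aw); lia.
  by rewrite -swap_posM (inj_eq (can_inj (fun U => swap_posK U p q))).
have w_w0 : w = w0 n.
  apply: eq_w0_descents => p q hq; apply: contraNN no_asc => aw.
  by apply/existsP; exists p; apply/existsP; exists q; rewrite hq eqxx.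
have u1 : u = 1%g.
  apply: len_eq0; have := len_mul_w0 (1 : 'S_n); move: sch.
  by rewrite /schubert w_w0 mul1g len1; lia.
by rewrite w_w0 u1 mul1g eqxx.
Qed.

Lemma monk_rule u i i' j k : i' = i.+1 :> nat -> j < k ->
  (len (swap_pos (u * w0 n) j k)).+1 = len (u * w0 n) ->
  f u (tperm i i') (swap_pos (u * w0 n) j k) = if j <= i < k then 1%R else 0%R.
Proof.
move=> hi jk; have [d] : exists d, k = j + d.+1 :> nat by exists (k - j.+1); lia.
elim: d u j k {jk} => [|d IHd] u j k hk cover; have sch := schubert_cover hi cover;
  set U := (u * w0 n)%g in cover sch *; set W := swap_pos U j k in cover sch *.
  have hk1 : k = j.+1 :> nat by rewrite hk addn1.
  have jk : j < k by rewrite hk1.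
  have kj : U k < U j by rewrite /W in cover; exact: cover_descent jk cover.
  have au : ascent u j k.
    by rewrite -[ascent u j k]negbK -ascent_mul_w0 ?neq_adj // /ascent -leqNgt ltnW.
  have aW : ascent W j k by rewrite ascent_swap_pos // ascent_mul_w0 ?neq_adj // au.
  have [ji|ji] := eqVneq j i.
    have ki' : k = i' by apply/val_inj; rewrite /= hk1 hi ji.
    subst j k; rewrite leqnn hi ltnSn -swap_pos1.
    have sum : len u + len (1 : 'S_n) + len W = 'C(n, 2) - 1.
      by move: sch; rewrite /schubert len_tperm_adj // len1; lia.
    have [_ ->] := descent_cycling sum hi au (ascent1 hi) aW.
    by rewrite /W swap_posK f_id_middle ?eqxx // /schubert len1 addn0 addnC len_mul_w0.
  rewrite vanishing //; last by exists j, k; split=> //; split; rewrite // ascent_tperm_adj.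
  by rewrite hk1 ltnS -eqn_leq (negbTE (ji : (j : nat) != i)).
have shift p q : q = p.+1 :> nat -> p != i -> ascent W p q = ascent U p q ->
    tperm p q k = tperm p q j + d.+1 :> nat ->
    f u (tperm i i') W = if tperm p q j <= i < tperm p q k then 1%R else 0%R.
  move=> hq pi agree hk'.
  have neq : ascent u p q != ascent W p q.
    by rewrite agree ascent_mul_w0 ?neq_adj //; case: ascent.
  rewrite (f_swap_pos_outer hq sch (ascent_tperm_adj hi hq pi) neq) /W /U.
  rewrite swap_pos_conj (swap_posM u); apply: IHd => //.
  by rewrite -swap_posM -swap_pos_conj; apply: len_swap_pos_cover.
(* Move the right end of (j, k) one step left, or the left end one step right if k = i+1. *)
have p_lt_n : j + d.+1 < n by have := ltn_ord k; lia.
pose p := Ordinal p_lt_n.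
have hp : k = p.+1 :> nat by rewrite hk addnS.
have [pj kj] : p != j /\ k != j by rewrite -!val_eqE /=; split; lia.
have [pi|pi] := eqVneq p i.
  have hi' : i = j + d.+1 :> nat by rewrite -pi.
  have q_lt_n : j.+1 < n by have := ltn_ord k; lia.
  pose q := Ordinal q_lt_n.
  have [ji jk qk] : [/\ j != i, j != k & q != k] by rewrite -!val_eqE /=; split; lia.
  rewrite (shift j q) ?tpermL ?tpermD //=.
    by congr (if _ then _ else _); apply/idP/idP; lia.
  have [hq q_lt_k] : q = j.+1 :> nat /\ q < k by rewrite /= hk; split; lia.
  by rewrite /W /U in cover *; apply: ascent_cover_first hq q_lt_k cover.
rewrite (shift p k) ?tpermR ?tpermD //.
  by congr (if _ then _ else _); move: pi; rewrite -val_eqE /= => pi; apply/idP/idP; lia.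
have j_lt_p : j < p by rewrite /=; lia.
by rewrite /W /U in cover *; apply: ascent_cover_last j_lt_p hp cover.
Qed.

End MonkRule.

Theorem theorem1 (n : nat) (hn : 2 <= n) (f : 'S_n -> 'S_n -> 'S_n -> int)
  (H1 : forall (u v w : 'S_n), len u + len v + len w = 'C(n, 2) - 1 ->
        forall i i' : 'I_n, val i' = (val i).+1 ->
        ascent u i i' -> ascent v i i' -> ascent w i i' ->
        f (swap_pos u i i') v w = f u (swap_pos v i i') w /\
        f u (swap_pos v i i') w = f u v (swap_pos w i i'))
  (H2 : forall (u v w : 'S_n), schubert u v w ->
        (exists i i' : 'I_n, val i' = (val i).+1 /\
           [/\ ascent u i i', ascent v i i' & ascent w i i']) ->
        f u v w = 0%R)
  (H3 : f 1%g 1%g (w0 n) = 1%R) :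
  forall (pi : 'S_n) (i i' : 'I_n), val i' = (val i).+1 ->
  forall j k : 'I_n,
    let tau := (pi * w0 n)%g in
    let sigma := swap_pos tau j k in
    j < k -> tau k < tau j -> len sigma = len tau - 1 ->
    [/\ (j <= i < k -> f pi (tperm i i') sigma = 1%R),
        (j <= i -> k <= i -> f pi (tperm i i') sigma = 0%R)
      & (i < j -> i < k -> f pi (tperm i i') sigma = 0%R)].
Proof.
move=> pi i i' hi j k tau sigma jk kj len_sigma; subst sigma tau.
have [lt_len _] := len_swap_pos_inversion jk kj.
have cover : (len (swap_pos (pi * w0 n) j k)).+1 = len (pi * w0 n) by lia.
rewrite (monk_rule H1 H2 H3 hi jk cover).
by split=> [->|_ ki|ij _] //; rewrite ?(ltnNge i) ?ki ?andbF // leqNgt ij.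
Qed.
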